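(* Let $C$ be a set, $d$ a small category, and $p,q,r$ $(C\mathcal y,d)$-bicomodules. Define $$p\otimes_{C\mathcal y,d}q:=\sum_{a\in C}\sum_{(i,j)\in p_a(1)\times q_a(1)}\mathcal y^{\,p[i]\times_{d(1)}q[j]},\qquad [q,r]_{C\mathcal y,d}:=\sum_{a\in C}\ \sum_{\varphi\in\mathbf{Set}[d](q_a,r_a)}\mathcal y^{\,\sum_{j\in q_a(1)}r[\varphi(j)]},$$ where $p[i]\times_{d(1)}q[j]$ is the product of the $d$-copresheaves $p[i]$ and $q[j]$, and $\sum_{j}r[\varphi(j)]$ is the coproduct of $d$-copresheaves. Then $[q,r]_{C\mathcal y,d}$ has a natural $(C\mathcal y,d)$-bicomodule structure, functorial (contravariantly in $q$, covariantly in $r$), and there is a natural isomorphism $$C\text{-}\mathbf{Set}[d]\big(p\otimes_{C\mathcal y,d}q,\ r\big)\cong C\text{-}\mathbf{Set}[d]\big(p,\ [q,r]_{C\mathcal y,d}\big).$$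
   Context: Small categories are comonoids in $(\mathbf{Poly},\mathcal y,\triangleleft)$; $C\mathcal y$ is the discrete category on $C$. $C\text{-}\mathbf{Set}[d]$ denotes the category of $(C\mathcal y,d)$-bicomodules (polynomials $m$ with compatible coactions $m\to C\mathcal y\triangleleft m$, $m\to m\triangleleft d$) and bicomodule maps. For such $m$ and $a\in C$, $m_a$ is the summand of $m$ over $a$, so $m\cong\sum_{a\in C}m_a$, and for each position $i$ the right coaction makes the direction set $m[i]$ (the set of elements of) a $d$-copresheaf. Each $m_a$ is thus a duc-query $X\mapsto\sum_{i\in m_a(1)}d\text{-}\mathbf{Set}(m[i],X)$; $\mathbf{Set}[d](q_a,r_a)$ is the set of natural transformations between these functors $d\text{-}\mathbf{Set}\to\mathbf{Set}$, and such a $\varphi$ sends each position $j\in q_a(1)$ to a position $\varphi(j)\in r_a(1)$ (together with a map $r[\varphi(j)]\to q[j]$ of $d$-copresheaves). *)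

From Stdlib Require Import FunctionalExtensionality ProofIrrelevance.



Record Cat := {
  ob : Type;
  hom : ob -> ob -> Type;
  cid : forall x, hom x x;
  ccomp : forall x y z, hom y z -> hom x y -> hom x z;
  ccomp_id_l : forall x y (f : hom x y), ccomp x y y (cid y) f = f;
  ccomp_id_r : forall x y (f : hom x y), ccomp x x y f (cid x) = f;
  ccomp_assoc : forall x y z w (h : hom z w) (g : hom y z) (f : hom x y),
      ccomp x z w h (ccomp x y z g f) = ccomp x y w (ccomp y z w h g) f
}.
Arguments cid {c} x.
Arguments hom : clear implicits.
Arguments ccomp {c x y z} _ _.

Record Copsh (d : Cat) := {
  cob : ob d -> Type;
  cmap : forall x y, hom d x y -> cob x -> cob y;
  cmap_id : forall x e, cmap x x (cid x) e = e;
  cmap_comp : forall x y z (g : hom d y z) (f : hom d x y) e,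
      cmap x z (ccomp g f) e = cmap y z g (cmap x y f e)
}.
Arguments cob {d} _ _.
Arguments cmap {d} _ {x y} _ _.

Record CopshHom (d : Cat) (F G : Copsh d) := {
  nt : forall x, cob F x -> cob G x;
  nt_nat : forall (x y : ob d) (f : hom d x y) (e : cob F x), nt y (cmap F f e) = cmap G f (nt x e)
}.
Arguments nt {d F G} _ x _.
Arguments nt_nat {d F G} _ {x y} f e.
Arguments cmap_id {d} _ {x} e.
Arguments cmap_comp {d} _ {x y z} g f e.
Arguments Build_CopshHom {d F G} nt nt_nat.
Arguments CopshHom {d} F G.
Arguments Build_Copsh {d} cob cmap cmap_id cmap_comp.

Set Implicit Arguments.
Unset Strict Implicit.

Definition CopshHom_id (d : Cat) (F : Copsh d) : CopshHom F F.
Proof. refine {| nt := fun x e => e |}. reflexivity. Defined.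

Definition CopshHom_comp (d : Cat) (F G H : Copsh d)
  (g : CopshHom G H) (f : CopshHom F G) : CopshHom F H.
Proof.
  refine {| nt := fun x e => nt g x (nt f x e) |}.
  intros. rewrite (nt_nat f), (nt_nat g). reflexivity.
Defined.

Definition prodCopsh (d : Cat) (F G : Copsh d) : Copsh d.
Proof.
  refine {| cob := fun x => (cob F x * cob G x)%type;
            cmap := fun x y f e => (cmap F f (fst e), cmap G f (snd e)) |}.
  - intros x [a b]; simpl; rewrite !cmap_id; reflexivity.
  - intros x y z g f [a b]; simpl; rewrite !cmap_comp; reflexivity.
Defined.

Definition prodCopsh_map (d : Cat) (F F' G G' : Copsh d)
  (f : CopshHom F F') (g : CopshHom G G') : CopshHom (prodCopsh F G) (prodCopsh F' G').
Proof.
  refine {| nt := fun x (e : cob (prodCopsh F G) x) =>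
                    ((nt f x (fst e), nt g x (snd e)) : cob (prodCopsh F' G') x) |}.
  intros x y h [a b]; simpl; rewrite (nt_nat f), (nt_nat g); reflexivity.
Defined.

Definition sumCopsh (d : Cat) (J : Type) (F : J -> Copsh d) : Copsh d.
Proof.
  refine {| cob := fun x => {j : J & cob (F j) x};
            cmap := fun x y f e => existT _ (projT1 e) (cmap (F (projT1 e)) f (projT2 e)) |}.
  - intros x [j a]; simpl; rewrite cmap_id; reflexivity.
  - intros x y z g f [j a]; simpl; rewrite cmap_comp; reflexivity.
Defined.

(* ---------- (Cy, d)-bicomodules ----------
   A (Cy,d)-bicomodule m is recorded through its decomposition m = sum_{a in C} m_a:
   for each a in C the positions m_a(1), and for each position i the direction
   set m[i] with the d-copresheaf structure induced by the right coaction. *)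
Record Bicomod (C : Type) (d : Cat) := {
  pos : C -> Type;
  dir : forall a, pos a -> Copsh d
}.
Arguments pos {C d} _ _.
Arguments dir {C d} _ {a} _.

(* A map of the a-summands q_a -> r_a: an element of Set[d](q_a, r_a).
   Positions forward, and for each position j a copresheaf map r[phi(j)] -> q[j]. *)
Record FiberHom (C : Type) (d : Cat) (q r : Bicomod C d) (a : C) := {
  fpos : pos q a -> pos r a;
  fdir : forall j, CopshHom (dir r (fpos j)) (dir q j)
}.
Arguments fpos {C d q r a} _ _.
Arguments fdir {C d q r a} _ j.
Arguments Build_FiberHom {C d q r a} fpos fdir.
Arguments FiberHom {C d} q r a.
Arguments Build_Bicomod {C d} pos dir.

Definition BHom (C : Type) (d : Cat) (m n : Bicomod C d) : Type :=
  forall a : C, FiberHom m n a.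

Definition FH_id (C : Type) (d : Cat) (m : Bicomod C d) (a : C) : FiberHom m m a :=
  {| fpos := fun i => i; fdir := fun i => CopshHom_id (dir m i) |}.

Definition FH_comp (C : Type) (d : Cat) (m n k : Bicomod C d) (a : C)
  (g : FiberHom n k a) (f : FiberHom m n a) : FiberHom m k a :=
  {| fpos := fun i => fpos g (fpos f i);
     fdir := fun i => CopshHom_comp (fdir f i) (fdir g (fpos f i)) |}.

Definition bid (C : Type) (d : Cat) (m : Bicomod C d) : BHom m m :=
  fun a => FH_id m a.

Definition bcomp (C : Type) (d : Cat) (m n k : Bicomod C d)
  (g : BHom n k) (f : BHom m n) : BHom m k :=
  fun a => FH_comp (g a) (f a).

Definition tensor (C : Type) (d : Cat) (p q : Bicomod C d) : Bicomod C d :=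
  {| pos := fun a => (pos p a * pos q a)%type;
     dir := fun a ij => prodCopsh (dir p (fst ij)) (dir q (snd ij)) |}.

Definition tensor_map (C : Type) (d : Cat) (p p' q q' : Bicomod C d)
  (f : BHom p' p) (h : BHom q' q) : BHom (tensor p' q') (tensor p q) :=
  fun a => {| fpos := fun (ij : pos (tensor p' q') a) =>
                        ((fpos (f a) (fst ij), fpos (h a) (snd ij)) : pos (tensor p q) a);
              fdir := fun ij => prodCopsh_map (fdir (f a) (fst ij)) (fdir (h a) (snd ij)) |}.

Definition ihom (C : Type) (d : Cat) (q r : Bicomod C d) : Bicomod C d :=
  {| pos := fun a => FiberHom q r a;
     dir := fun a phi => sumCopsh (fun j : pos q a => dir r (fpos phi j)) |}.

Definition ihom_dir_map (C : Type) (d : Cat) (q q' r r' : Bicomod C d)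
  (h : BHom q' q) (g : BHom r r') (a : C) (phi : FiberHom q r a) :
  CopshHom (dir (ihom q' r') (FH_comp (g a) (FH_comp phi (h a))))
           (dir (ihom q r) phi).
Proof.
  refine {| nt := fun x (e : cob (dir (ihom q' r') (FH_comp (g a) (FH_comp phi (h a)))) x) =>
              (existT _ (fpos (h a) (projT1 e))
                 (nt (fdir (g a) (fpos phi (fpos (h a) (projT1 e)))) x (projT2 e))
                : cob (dir (ihom q r) phi) x) |}.
  intros x y f [j e]; simpl. rewrite (nt_nat (fdir (g a) _)). reflexivity.
Defined.

Definition ihom_map (C : Type) (d : Cat) (q q' r r' : Bicomod C d)
  (h : BHom q' q) (g : BHom r r') : BHom (ihom q r) (ihom q' r') :=
  fun a => {| fpos := fun (phi : pos (ihom q r) a) =>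
                        (FH_comp (g a) (FH_comp phi (h a)) : pos (ihom q' r') a);
              fdir := fun phi => ihom_dir_map h g phi |}.

Definition Bijective (A B : Type) (f : A -> B) : Prop :=
  exists g : B -> A, (forall x, g (f x) = x) /\ (forall y, f (g y) = y).

(* A map [p ⊗ q -> r] sends a pair of positions [(i, j)] over [a] to a position of
   [r] together with a copresheaf map [r[-] -> p[i] × q[j]], i.e. a pair of maps
   into [p[i]] and into [q[j]].  Fixing [i], the positions and the [q[j]]-components
   form a fibre map [q_a -> r_a], a position of [[q, r]]; the [p[i]]-components,
   taken for all [j] at once, form a single map out of the coproduct
   [Σ_j r[φ(j)]], a direction map of [[q, r]].  So the adjunction is the universal
   property of products and coproducts of copresheaves, and every required identity
   holds up to eta for pairs and dependent pairs, once maps of copresheaves are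
   compared extensionally. *)
From Stdlib Require Import FunctionalExtensionality ProofIrrelevance.

Lemma CopshHom_ext (d : Cat) (F G : Copsh d) (a b : CopshHom F G) :
  (forall x e, nt a x e = nt b x e) -> a = b.
Proof.
  destruct a as [na pa], b as [nb pb]; simpl; intros Hab.
  assert (E : na = nb).
  { apply functional_extensionality_dep; intro x.
    apply functional_extensionality; intro e; apply Hab. }
  subst nb; f_equal; apply proof_irrelevance.
Qed.

Lemma FiberHom_ext (C : Type) (d : Cat) (q r : Bicomod C d) (a : C)
    (f g : FiberHom q r a) :
  (forall j, existT (fun y => CopshHom (dir r y) (dir q j)) (fpos f j) (fdir f j)
           = existT (fun y => CopshHom (dir r y) (dir q j)) (fpos g j) (fdir g j)) ->
  f = g.
Proof.
  destruct f as [fp fd], g as [gp gd]; simpl; intros Hfg.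
  assert (E : fp = gp).
  { apply functional_extensionality; intro j; exact (f_equal (@projT1 _ _) (Hfg j)). }
  subst gp; f_equal; apply functional_extensionality_dep; intro j.
  exact (inj_pair2 _ _ _ _ _ (Hfg j)).
Qed.

Lemma ihom_existT_eq (C : Type) (d : Cat) (q r : Bicomod C d) (a : C) (G : Copsh d)
    (fp : pos q a -> pos r a) (fd1 fd2 : forall j, CopshHom (dir r (fp j)) (dir q j))
    (A : CopshHom (dir (ihom q r) (Build_FiberHom fp fd1)) G)
    (B : CopshHom (dir (ihom q r) (Build_FiberHom fp fd2)) G) :
  (forall j x e, nt (fd1 j) x e = nt (fd2 j) x e) ->
  (forall x e, nt A x e = nt B x e) ->
  existT (fun phi => CopshHom (dir (ihom q r) phi) G) (Build_FiberHom fp fd1) A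
  = existT (fun phi => CopshHom (dir (ihom q r) phi) G) (Build_FiberHom fp fd2) B.
Proof.
  intros Hfd HAB.
  assert (E : fd1 = fd2).
  { apply functional_extensionality_dep; intro j; apply CopshHom_ext, Hfd. }
  subst fd2; f_equal; apply CopshHom_ext, HAB.
Qed.

Section InternalHom.
Variables (C : Type) (d : Cat).

Lemma ihom_map_id (q r : Bicomod C d) : ihom_map (bid q) (bid r) = bid (ihom q r).
Proof.
  apply functional_extensionality_dep; intro a.
  apply FiberHom_ext; intros [fp fd].
  apply ihom_existT_eq; [reflexivity | intros x [j e]; reflexivity].
Qed.

Lemma ihom_map_comp (q q' q'' r r' r'' : Bicomod C d)
    (h : BHom q' q) (h' : BHom q'' q') (g : BHom r r') (g' : BHom r' r'') :
  ihom_map (bcomp h h') (bcomp g' g) = bcomp (ihom_map h' g') (ihom_map h g).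
Proof.
  apply functional_extensionality_dep; intro a.
  apply FiberHom_ext; intros [fp fd].
  apply ihom_existT_eq; [reflexivity | intros x [j e]; reflexivity].
Qed.

Variables p q r : Bicomod C d.

Definition curry_fiber_dir (u : BHom (tensor p q) r) (a : C) (i : pos p a)
    (j : pos q a) : CopshHom (dir r (fpos (u a) (i, j))) (dir q j).
Proof.
  refine {| nt := fun x e => (snd (nt (fdir (u a) (i, j)) x e) : cob (dir q j) x) |}.
  intros x y f e; rewrite (nt_nat (fdir (u a) (i, j))); reflexivity.
Defined.

Definition curry_dir (u : BHom (tensor p q) r) (a : C) (i : pos p a) :
  CopshHom (sumCopsh (fun j => dir r (fpos (u a) (i, j)))) (dir p i).
Proof.
  refine {| nt := fun x (e : cob (sumCopsh (fun j => dir r (fpos (u a) (i, j)))) x) =>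
                    (fst (nt (fdir (u a) (i, projT1 e)) x (projT2 e)) : cob (dir p i) x) |}.
  intros x y f [j e]; simpl; rewrite (nt_nat (fdir (u a) (i, j))); reflexivity.
Defined.

Definition curry (u : BHom (tensor p q) r) : BHom p (ihom q r) :=
  fun a => {| fpos := fun i => (Build_FiberHom (fun j => fpos (u a) (i, j))
                                               (curry_fiber_dir u a i)
                                : pos (ihom q r) a);
              fdir := curry_dir u a |}.

Definition uncurry_dir (v : BHom p (ihom q r)) (a : C) (ij : pos (tensor p q) a) :
  CopshHom (dir r (fpos (fpos (v a) (fst ij)) (snd ij))) (dir (tensor p q) ij).
Proof.
  refine {| nt := fun x e =>
     ((nt (fdir (v a) (fst ij)) x
          (existT (fun j => cob (dir r (fpos (fpos (v a) (fst ij)) j)) x) (snd ij) e),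
       nt (fdir (fpos (v a) (fst ij)) (snd ij)) x e) : cob (dir (tensor p q) ij) x) |}.
  intros x y f e; simpl.
  rewrite <- (nt_nat (fdir (fpos (v a) (fst ij)) (snd ij))).
  rewrite <- (nt_nat (fdir (v a) (fst ij))); reflexivity.
Defined.

Definition uncurry (v : BHom p (ihom q r)) : BHom (tensor p q) r :=
  fun a => {| fpos := fun ij : pos (tensor p q) a => (fpos (fpos (v a) (fst ij)) (snd ij)
                                                     : pos r a);
              fdir := uncurry_dir v a |}.

Lemma curryK (u : BHom (tensor p q) r) : uncurry (curry u) = u.
Proof.
  apply functional_extensionality_dep; intro a.
  apply FiberHom_ext; intros [i j]; simpl; f_equal.
  apply CopshHom_ext; intros x e; symmetry; apply surjective_pairing.
Qed.

Lemma uncurryK (v : BHom p (ihom q r)) : curry (uncurry v) = v.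
Proof.
  apply functional_extensionality_dep; intro a.
  apply FiberHom_ext; intro i.
  unfold curry, curry_fiber_dir, curry_dir, uncurry, uncurry_dir; cbn.
  generalize (fdir (v a) i) as w; generalize (fpos (v a) i) as phi.
  intros [fp fd] w.
  apply ihom_existT_eq; [reflexivity | intros x [j e]; reflexivity].
Qed.

Lemma curry_bijective : Bijective curry.
Proof. exists uncurry; split; [exact curryK | exact uncurryK]. Qed.

End InternalHom.

Arguments curry {C d p q r} u a.

Lemma curry_natural (C : Type) (d : Cat) (p p' q q' r r' : Bicomod C d)
    (f : BHom p' p) (h : BHom q' q) (g : BHom r r') (u : BHom (tensor p q) r) :
  curry (bcomp g (bcomp u (tensor_map f h))) = bcomp (ihom_map h g) (bcomp (curry u) f).
Proof.
  apply functional_extensionality_dep; intro a.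
  apply FiberHom_ext; intro i.
  apply ihom_existT_eq; [reflexivity | intros x [j e]; reflexivity].
Qed.

Theorem proposition2p46 (C : Type) (d : Cat) :
  (* [-,-] is a functor (contravariant in q, covariant in r) *)
  (forall q r : Bicomod C d, ihom_map (bid q) (bid r) = bid (ihom q r)) /\
  (forall (q q' q'' r r' r'' : Bicomod C d)
          (h : BHom q' q) (h' : BHom q'' q') (g : BHom r r') (g' : BHom r' r''),
      ihom_map (bcomp h h') (bcomp g' g) = bcomp (ihom_map h' g') (ihom_map h g)) /\
  (* natural isomorphism C-Set[d](p (x) q, r) ~= C-Set[d](p, [q, r]) *)
  exists Phi : forall p q r : Bicomod C d, BHom (tensor p q) r -> BHom p (ihom q r),
    (forall p q r : Bicomod C d, Bijective (Phi p q r)) /\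
    (forall (p p' q q' r r' : Bicomod C d)
            (f : BHom p' p) (h : BHom q' q) (g : BHom r r') (u : BHom (tensor p q) r),
        Phi p' q' r' (bcomp g (bcomp u (tensor_map f h)))
        = bcomp (ihom_map h g) (bcomp (Phi p q r u) f)).
Proof.
  split; [exact (@ihom_map_id C d) | split; [exact (@ihom_map_comp C d) |]].
  exists (@curry C d); split.
  - exact (@curry_bijective C d).
  - exact (@curry_natural C d).
Qed.
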